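(* Let $G\le\mathrm{O}(d)$ be finite, $x,y\in\mathbb{R}^d$, and $T\subseteq[y]$. Consider the statements: (a) $T\supseteq S(x,y)$; (b) $\bigcup_{p\in T}\overline{V_p}\supseteq\overline{V_x}$; (c) for every $z\in\mathbb{R}^d$ there exists $v\in\arg\max_{p\in[z]}\langle p,x\rangle$ such that $T\cap\arg\max_{q\in[y]}\langle q,v\rangle\ne\varnothing$. Then (a)$\Leftrightarrow$(b)$\Rightarrow$(c), and if moreover $x\in P(G)$, then (c)$\Rightarrow$(b).
   Context: For $x\in\mathbb{R}^d$, $[x]:=\{gx:g\in G\}$. The open Voronoi cell $V_x$ is the set of $y\in\mathbb{R}^d$ such that $x$ is the unique maximizer of $\langle p,y\rangle$ over $p\in[x]$, and $\overline{V_x}$ is its closure. $S(x,y):=\{q\in[y]:V_q\cap V_x\ne\varnothing\}$. $P(G):=\{x\in\mathbb{R}^d:\mathrm{stab}_G(x)=\{\mathrm{id}\}\}$. *)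

From HB Require Import structures.
From mathcomp Require Import all_boot all_order all_algebra.
From mathcomp Require Import all_classical all_reals all_analysis.
Set Implicit Arguments. Unset Strict Implicit. Unset Printing Implicit Defensive.
Import Order.TTheory GRing.Theory Num.Theory.
Import numFieldNormedType.Exports.
Local Open Scope classical_set_scope.
Local Open Scope ring_scope.

Definition ip (R : realType) (d : nat) (p y : 'cV[R]_d) : R :=
  \sum_(i < d) p i 0 * y i 0.

Definition finite_orth_group (R : realType) (d : nat) (G : set 'M[R]_d) : Prop :=
  [/\ finite_set G, G 1%:M,
      (forall g h, G g -> G h -> G (g *m h)),
      (forall g, G g -> G (invmx g)) &
      (forall g, G g -> g *m g^T = 1%:M)].

Definition gorbit (R : realType) (d : nat) (G : set 'M[R]_d) (x : 'cV[R]_d)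
  : set 'cV[R]_d := (fun g => g *m x) @` G.

(* open Voronoi cell: x is the unique maximizer of <p,y> over p in [x] *)
Definition vor (R : realType) (d : nat) (G : set 'M[R]_d) (x : 'cV[R]_d)
  : set 'cV[R]_d :=
  [set y | forall p, gorbit G x p -> p != x -> ip p y < ip x y ].

Definition Sxy (R : realType) (d : nat) (G : set 'M[R]_d) (x y : 'cV[R]_d)
  : set 'cV[R]_d :=
  [set q | gorbit G y q /\ vor G q `&` vor G x !=set0].

Definition Pfree (R : realType) (d : nat) (G : set 'M[R]_d) : set 'cV[R]_d :=
  [set x | forall g, G g -> g *m x = x -> g = 1%:M].

Definition argmax_orbit (R : realType) (d : nat) (G : set 'M[R]_d) (z x : 'cV[R]_d)
  : set 'cV[R]_d :=
  [set p | gorbit G z p /\ forall p', gorbit G z p' -> ip p' x <= ip p x].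

From HB Require Import structures.
From mathcomp Require Import all_boot all_order all_algebra.
From mathcomp Require Import all_classical all_reals all_analysis.
From mathcomp Require Import lra.
Import Order.TTheory GRing.Theory Num.Theory.
Import numFieldNormedType.Exports.
Local Open Scope classical_set_scope.
Local Open Scope ring_scope.

(* The closure of V_a is the set of v for which a maximizes <., v> on [a]
   (closure_vorE), so (b) says that every w in the closure of V_x admits a
   maximizer of <., w> on [y] lying in T.  For such w and small e > 0 the point
   u = w + e x lies in V_x, and every maximizer of <., u> on [y] still maximizes
   <., w>.  Moving u slightly towards such a maximizer q keeps it in V_x and
   puts it in V_q, so q is in S(x, y): this gives (a) -> (b).  Conversely, at a
   point of both V_q and V_x the only maximizer on [y] is q: (b) -> (a).
   The identity <g z, x> = <z, g^T x> turns the maximizers in (c) into points of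
   the closure of V_x, giving (b) -> (c); for (c) -> (b) apply (c) to z = u,
   where the trivial stabilizer of x forces the maximizer v to be u itself. *)

Section InnerProduct.
Context {R : realType} {d : nat}.
Implicit Types (p q u v : 'cV[R]_d) (g : 'M[R]_d).

Lemma ipE p v : ip p v = (p^T *m v) 0 0.
Proof. by rewrite mxE; apply: eq_bigr => i _; rewrite mxE. Qed.

Lemma ipC p v : ip p v = ip v p.
Proof. by apply: eq_bigr => i _; rewrite mulrC. Qed.

Lemma ipDr p u v : ip p (u + v) = ip p u + ip p v.
Proof. by rewrite !ipE mulmxDr mxE. Qed.

Lemma ipZr p t v : ip p (t *: v) = t * ip p v.
Proof. by rewrite !ipE -scalemxAr mxE. Qed.

Lemma ipBr p u v : ip p (u - v) = ip p u - ip p v.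
Proof. by rewrite !ipE mulmxBr !mxE. Qed.

Lemma ip_mulmxl g u v : ip (g *m u) v = ip u (g^T *m v).
Proof. by rewrite !ipE trmx_mul mulmxA. Qed.

Lemma ip_continuous p : continuous (ip p).
Proof.
have term_cont i : continuous (fun v : 'cV[R]_d => p i 0 * v i 0).
  move=> v; apply: continuousM; first exact: cst_continuous.
  exact: coord_continuous.
by apply: continuous_big => [|i _]; [exact: add_continuous | exact: term_cont].
Qed.

Lemma ip_gt0 v : v != 0 -> 0 < ip v v.
Proof.
have sq_ge0 i : 0 <= v i 0 * v i 0 by rewrite -expr2 sqr_ge0.
move=> v0; rewrite lt_def sumr_ge0 ?andbT //; apply: contraNN v0 => /eqP v2_0.
apply/eqP/matrixP => i j; rewrite ord1 mxE; apply/eqP.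
by rewrite -sqrf_eq0 expr2 (psumr_eq0P _ v2_0).
Qed.

Lemma ip_lt_norm p q : ip p p = ip q q -> p != q -> ip p q < ip q q.
Proof.
move=> pq p_neq_q; have := ip_gt0 (q - p).
rewrite subr_eq0 eq_sym => /(_ p_neq_q).
rewrite !ipBr ![ip (q - p) _]ipC !ipBr pq (ipC q p); lra.
Qed.

End InnerProduct.

Lemma finite_set_argmax {T : choiceType} {disp} {O : orderType disp}
    {A : set T} (f : T -> O) :
  finite_set A -> A !=set0 -> exists2 m, A m & forall a, A a -> (f a <= f m)%O.
Proof.
move=> /finite_seqP [s ->] [a0 /= a0s].
case: (@arg_maxP _ _ _ (SeqSub a0s) xpredT (f \o val)) => // i _ imax.
by exists (val i) => [|a /= As]; [exact: valP | exact: (imax (SeqSub As))].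
Qed.

Lemma near_finite_forall {U : choiceType} {T : Type} {F : set_system T}
    {FF : Filter F} {A : set U} (P : U -> T -> Prop) :
  finite_set A -> (forall i, A i -> \forall t \near F, P i t) ->
  \forall t \near F, forall i, A i -> P i t.
Proof.
move=> /finite_fsetP [X ->] HP.
by apply: filterS (filter_bigI FF HP) => t tX i Xi; exact: tX.
Qed.

Lemma near0_affine_gt0 {R : realFieldType} {a : R} (b : R) :
  0 < a -> \forall e \near 0, 0 < a + e * b.
Proof.
move=> a_gt0; have : (fun e : R => a + e * b) @ 0 --> a + 0 * b.
  apply: cvgD; first exact: cvg_cst.
  by apply: cvgM; [exact: cvg_id | exact: cvg_cst].
by rewrite mul0r addr0 => /cvgr_gt; apply.
Qed.

Lemma near0_exists_gt0 {R : realFieldType} (P : R -> Prop) :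
  (\forall e \near 0, P e) -> exists2 e, 0 < e & P e.
Proof.
move=> P0; have [e [e_gt0 Pe]] : exists e : R, 0 < e /\ P e.
  apply: (@filter_ex _ (0 : R)^'+); apply: filterI; first exact: nbhs_right_gt.
  exact: cvg_within P0.
by exists e.
Qed.

Lemma finite_perturb_gt0 {R : realFieldType} {U : choiceType} {A : set U}
    (a b : U -> R) : finite_set A ->
  exists2 e, 0 < e & forall i, A i -> 0 < a i -> 0 < a i + e * b i.
Proof.
move=> finA; apply: near0_exists_gt0.
apply: (@near_finite_forall _ _ (nbhs (0 : R)) _ A
  (fun i e => 0 < a i -> 0 < a i + e * b i) finA) => i _.
have [a_gt0|_] := ltP 0 (a i); last exact: filterE.
by apply: filterS (near0_affine_gt0 (b i) a_gt0) => e + _.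
Qed.

Section Orbits.
Context {R : realType} {d : nat} {G : set 'M[R]_d}.
Hypothesis hG : finite_orth_group G.
Implicit Types (a p q v x y z : 'cV[R]_d) (g : 'M[R]_d).

Lemma group1 : G 1%:M.
Proof. by case: hG. Qed.

Lemma groupM {g h} : G g -> G h -> G (g *m h).
Proof. by case: hG => _ _ GM _ _; exact: GM. Qed.

Lemma orth_mulmxT {g} : G g -> g *m g^T = 1%:M.
Proof. by case: hG => _ _ _ _; exact. Qed.

Lemma orth_mulTmx {g} : G g -> g^T *m g = 1%:M.
Proof. by move/orth_mulmxT/mulmx1C. Qed.

Lemma groupT {g} : G g -> G g^T.
Proof.
move=> Gg; have [g_unit _] := mulmx1_unit (orth_mulmxT Gg).
suff <- : invmx g = g^T by case: hG => _ _ _ GV _; exact: GV.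
by rewrite -[invmx g]mulmx1 -(orth_mulmxT Gg) mulmxA mulVmx // mul1mx.
Qed.

Lemma orbit_refl a : gorbit G a a.
Proof. by exists 1%:M; [exact: group1 | rewrite mul1mx]. Qed.

Lemma orbit_finite a : finite_set (gorbit G a).
Proof. by apply: finite_image; case: hG. Qed.

Lemma orbitE {a q} : gorbit G a q -> gorbit G q = gorbit G a.
Proof.
case=> g Gg <-{q}; apply/seteqP; split=> _ [h Gh <-].
  by exists (h *m g); [exact: groupM | rewrite mulmxA].
exists (h *m g^T); first by apply: groupM => //; exact: groupT.
by rewrite -mulmxA (mulmxA g^T) orth_mulTmx // mul1mx.
Qed.

Lemma orbit_ip_norm {a q} : gorbit G a q -> ip q q = ip a a.
Proof. by case=> g Gg <-; rewrite ip_mulmxl mulmxA orth_mulTmx // mul1mx. Qed.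

Lemma orbit_ip_lt {a p q} :
  gorbit G a p -> gorbit G a q -> p != q -> ip p q < ip q q.
Proof.
move=> ap aq; apply: ip_lt_norm.
by rewrite (orbit_ip_norm ap) (orbit_ip_norm aq).
Qed.

Lemma argmax_orbit_exists z x : exists v, argmax_orbit G z x v.
Proof.
have [v] := finite_set_argmax (fun p => ip p x) (orbit_finite z)
  (ex_intro _ z (orbit_refl z)).
by exists v.
Qed.

Lemma argmax_orbitE {y t} : gorbit G y t -> argmax_orbit G t = argmax_orbit G y.
Proof. by move=> yt; rewrite /argmax_orbit (orbitE yt). Qed.

Lemma argmax_orbit_swap {z x v} : argmax_orbit G z x v -> argmax_orbit G x v x.
Proof.
case=> zv vmax; split=> [|_ [g Gg <-]]; first exact: orbit_refl.
rewrite ip_mulmxl ![ip x _]ipC; apply: vmax.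
by rewrite -(orbitE zv); exists g^T => //; exact: groupT.
Qed.

End Orbits.

Section Voronoi.
Context {R : realType} {d : nat} {G : set 'M[R]_d}.
Hypothesis hG : finite_orth_group G.
Implicit Types (a c p q u v w x y : 'cV[R]_d).

Lemma vor_argmax {a v} : vor G a v -> argmax_orbit G a v a.
Proof.
move=> av; split=> [|p ap]; first exact: orbit_refl.
by have [->|pa] := eqVneq p a; [exact: lexx | exact/ltW/av].
Qed.

Lemma vor_argmax_uniq {a v p} : vor G a v -> argmax_orbit G a v p -> p = a.
Proof.
move=> av [ap pmax]; apply/eqP; apply: contraT => pa.
by have := pmax a (orbit_refl hG a); rewrite leNgt av.
Qed.

Lemma vor_addZ {a c t} : argmax_orbit G a c a -> 0 < t -> vor G a (c + t *: a).
Proof.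
move=> [_ cmax] t_gt0 p ap pa; rewrite !ipDr !ipZr.
have := cmax p ap; have := orbit_ip_lt hG ap (orbit_refl hG a) pa; nra.
Qed.

Lemma closed_argmax_self a : closed [set v | argmax_orbit G a v a].
Proof.
have -> : [set v | argmax_orbit G a v a] =
    \bigcap_(p in gorbit G a) [set v | ip p v <= ip a v].
  apply/seteqP; split=> [v [_ vmax] p ap | v vmax]; first exact: vmax.
  by split; [exact: orbit_refl | exact: vmax].
apply: closed_bigI => p _.
have -> : [set v | ip p v <= ip a v] =
    (fun v => ip p v - ip a v) @^-1` [set r | r <= 0].
  by apply/seteqP; split=> v /=; rewrite subr_le0.
apply: preimage_closed; last exact: closed_le.
by move=> v _; exact: continuousB (ip_continuous p v) (ip_continuous a v).
Qed.

Lemma closure_vorE a : closure (vor G a) = [set v | argmax_orbit G a v a].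
Proof.
apply/seteqP; split.
  rewrite [X in _ `<=` X](closure_id _).1; last exact: closed_argmax_self.
  by apply: closureS => v; exact: vor_argmax.
move=> c ca; apply: (@closed_cvg _ _ (0 : R)^'+ _ (fun t => c + t *: a)).
- exact: closed_closure.
- apply: filterS (nbhs_right_gt 0) => t t_gt0.
  by apply: subset_closure; exact: vor_addZ.
- rewrite -[X in _ --> X]addr0 -(scale0r a); apply: cvg_within_filter.
  apply: cvgD; first exact: cvg_cst.
  by apply: cvgZ; [exact: cvg_id | exact: cvg_cst].
Qed.

Lemma closure_vor_coverP x {y} {T : set 'cV[R]_d} : T `<=` gorbit G y ->
  closure (vor G x) `<=` \bigcup_(p in T) closure (vor G p) <->
  (forall w, argmax_orbit G x w x -> exists2 p, T p & argmax_orbit G y w p).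
Proof.
move=> Ty; rewrite closure_vorE.
have coverE w : (\bigcup_(p in T) closure (vor G p)) w <->
    exists2 p, T p & argmax_orbit G y w p.
  split=> -[p Tp pw]; exists p => //; move: pw;
  by rewrite closure_vorE /= (argmax_orbitE hG (Ty p Tp)).
by split=> cover w /cover /coverE.
Qed.

Lemma argmax_orbit_perturb x y w : exists2 e, 0 < e &
  argmax_orbit G y (w + e *: x) `<=` argmax_orbit G y w.
Proof.
have [q0 [yq0 q0max]] := argmax_orbit_exists hG y w.
have [e e_gt0 He] := finite_perturb_gt0 (fun q => ip q0 w - ip q w)
  (fun q => ip q0 x - ip q x) (orbit_finite hG y).
exists e => // t [yt tmax]; split=> // p yp; apply: le_trans (q0max p yp) _.
rewrite leNgt; apply/negP => tlt; move: (He t yt); rewrite subr_gt0 => /(_ tlt).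
by have := tmax q0 yq0; rewrite !ipDr !ipZr mulrBr; lra.
Qed.

Lemma vor_approx {x} y {w} : argmax_orbit G x w x ->
  exists2 u, vor G x u & argmax_orbit G y u `<=` argmax_orbit G y w.
Proof.
move=> xw; have [e e_gt0 sub_w] := argmax_orbit_perturb x y w.
by exists (w + e *: x) => //; exact: vor_addZ.
Qed.

Lemma Sxy_cover {x} y {w} : argmax_orbit G x w x ->
  exists2 q, Sxy G x y q & argmax_orbit G y w q.
Proof.
move=> xw; have [u xu sub_w] := vor_approx y xw.
have [q uq] := argmax_orbit_exists hG y u; have yq : gorbit G y q := uq.1.
have [e e_gt0 He] := finite_perturb_gt0 (fun p => ip x u - ip p u)
  (fun p => ip x q - ip p q) (orbit_finite hG x).
exists q; last exact: sub_w.
split=> //; exists (u + e *: q); split.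
  by apply: vor_addZ => //; rewrite (argmax_orbitE hG yq).
move=> p xp px; move: (He p xp); rewrite subr_gt0 => /(_ (xu p xp px)).
by rewrite !ipDr !ipZr mulrBr; lra.
Qed.

Lemma Sxy_argmax_uniq {x y q} : Sxy G x y q ->
  exists2 w, argmax_orbit G x w x & forall p, argmax_orbit G y w p -> p = q.
Proof.
move=> [yq [w [qw xw]]]; exists w; first exact: vor_argmax.
by move=> p; rewrite -(argmax_orbitE hG yq); exact: vor_argmax_uniq.
Qed.

Lemma argmax_orbit_free {x u v} :
  Pfree G x -> vor G x u -> argmax_orbit G u x v -> v = u.
Proof.
move=> x_free xu [[g Gg <-] gmax].
have gTx : g^T *m x = x.
  apply/eqP; apply: contraT => gTx_neq.
  have := xu _ (ex_intro2 _ _ _ (groupT hG Gg) erefl) gTx_neq.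
  by rewrite ipC [ip x u]ipC -ip_mulmxl ltNge gmax //; exact: orbit_refl.
by rewrite -[g]trmxK (x_free _ (groupT hG Gg) gTx) trmx1 mul1mx.
Qed.

End Voronoi.

Theorem lemma24 (R : realType) (d : nat) (G : set 'M[R]_d)
  (x y : 'cV[R]_d) (T : set 'cV[R]_d) :
  finite_orth_group G -> T `<=` gorbit G y ->
  let a := Sxy G x y `<=` T in
  let b := closure (vor G x) `<=` \bigcup_(p in T) closure (vor G p) in
  let c := forall z : 'cV[R]_d, exists2 v, argmax_orbit G z x v &
             T `&` argmax_orbit G y v !=set0 in
  [/\ a <-> b, b -> c & (Pfree G x -> c -> b)].
Proof.
move=> hG Ty a b c; have bE : b <-> _ := closure_vor_coverP hG x Ty.
have ab : a -> b.
  move=> STy; apply/bE => w /(Sxy_cover hG y) [q Sq wq].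
  by exists q => //; exact: STy.
have ba : b -> a.
  move=> /bE cover q /(Sxy_argmax_uniq hG) [w xw w_uniq].
  by have [p Tp /w_uniq <-] := cover w xw.
have bc : b -> c.
  move=> /bE cover z; have [v zv] := argmax_orbit_exists hG z x.
  have [p Tp vp] := cover v (argmax_orbit_swap hG zv).
  by exists v => //; exists p.
have cb : Pfree G x -> c -> b.
  move=> x_free Hc; apply/bE => w xw; have [u xu sub_w] := vor_approx hG y xw.
  have [v uv [t [Tt]]] := Hc u.
  rewrite (argmax_orbit_free hG x_free xu uv) => yut.
  by exists t => //; exact: sub_w.
by split; first split.
Qed.
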